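(* Let $A\subset\mathbb{R}$, let $f:A\to\mathbb{R}$ be a function and let $a,L\in\mathbb{R}$. Then the following are equivalent: (i) for every real $\varepsilon>0$ there exists a real $\delta_\varepsilon>0$ such that $$\left\{x\in\left((a-\delta_{\varepsilon},a+\delta_{\varepsilon})\setminus\{a\}\right)\cap A:\ |f(x)-L|\geq\varepsilon\right\}=\varnothing;$$ (ii) for every real $\varepsilon>0$ there exists a real $\delta_\varepsilon>0$ such that the set $$\left\{x\in\left((a-\delta_{\varepsilon},a+\delta_{\varepsilon})\setminus\{a\}\right)\cap A:\ |f(x)-L|\geq\varepsilon\right\}$$ is finite. That is, $T_1\lim_{x\to a}f(x)=L$ if and only if $T_3\lim_{x\to a}f(x)=L$.
   Context: Condition (i) is the classical limit, written $T_1\lim_{x\to a}f(x)=L$; condition (ii) defines the notion written $T_3\lim_{x\to a}f(x)=L$. *)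

From Stdlib Require Import Reals List.
Open Scope R_scope.

Definition exc_set (A : R -> Prop) (f : R -> R) (a L d eps : R) : R -> Prop :=
  fun x => (a - d < x < a + d /\ x <> a) /\ A x /\ Rabs (f x - L) >= eps.

Definition set_empty (S : R -> Prop) : Prop := forall x, ~ S x.

Definition set_finite (S : R -> Prop) : Prop :=
  exists l : list R, forall x, S x -> In x l.

Definition T1_lim (A : R -> Prop) (f : R -> R) (a L : R) : Prop :=
  forall eps, eps > 0 -> exists d, d > 0 /\ set_empty (exc_set A f a L d eps).

Definition T3_lim (A : R -> Prop) (f : R -> R) (a L : R) : Prop :=
  forall eps, eps > 0 -> exists d, d > 0 /\ set_finite (exc_set A f a L d eps).

(** An empty set is finite, so (i) gives (ii). Conversely, the finitely many
    points of a finite exceptional set lie at positive distance from [a];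
    shrinking the radius below all these distances empties the set. *)
From Stdlib Require Import Reals List Lra.
Open Scope R_scope.

Lemma list_away_from_point (a : R) (l : list R) :
  exists r, 0 < r /\ forall x, In x l -> x <> a -> r <= Rabs (x - a).
Proof.
  induction l as [|y l [r [Hr Hl]]].
  - exists 1; split; [lra | intros x []].
  - destruct (Req_dec y a) as [-> | Hya].
    + exists r; split; [exact Hr |].
      intros x [<- | Hx] Hxa; [congruence | auto].
    + assert (Hy : 0 < Rabs (y - a)) by (apply Rabs_pos_lt; lra).
      exists (Rmin r (Rabs (y - a))); split; [now apply Rmin_glb_lt |].
      intros x [<- | Hx] Hxa; [apply Rmin_r |].
      eapply Rle_trans; [apply Rmin_l | auto].
Qed.

Lemma set_finite_empty (S : R -> Prop) : set_empty S -> set_finite S.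
Proof. intros HS; exists nil; intros x Hx; exact (HS x Hx). Qed.

Lemma exc_set_le_radius (A : R -> Prop) (f : R -> R) (a L d d' eps x : R) :
  d' <= d -> exc_set A f a L d' eps x -> exc_set A f a L d eps x.
Proof. unfold exc_set; intros Hd [[Hx Hxa] HAf]; repeat split; tauto || lra. Qed.

Lemma exc_set_finite_shrink (A : R -> Prop) (f : R -> R) (a L d eps : R) :
  0 < d -> set_finite (exc_set A f a L d eps) ->
  exists d', 0 < d' /\ set_empty (exc_set A f a L d' eps).
Proof.
  intros Hd [l Hl].
  destruct (list_away_from_point a l) as [r [Hr Hfar]].
  exists (Rmin d r); split; [now apply Rmin_glb_lt |].
  intros x Hx.
  assert (Hin : In x l).
  { apply Hl; exact (exc_set_le_radius _ _ _ _ _ _ _ _ (Rmin_l d r) Hx). }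
  destruct Hx as [[Hint Hxa] _].
  assert (Hnear : Rabs (x - a) < r).
  { pose proof (Rmin_r d r); apply Rabs_def1; lra. }
  pose proof (Hfar x Hin Hxa); lra.
Qed.

Theorem theorem1 (A : R -> Prop) (f : R -> R) (a L : R) :
  T1_lim A f a L <-> T3_lim A f a L.
Proof.
  split; intros H eps Heps; destruct (H eps Heps) as [d [Hd Hexc]].
  - exists d; split; [exact Hd | now apply set_finite_empty].
  - exact (exc_set_finite_shrink A f a L d eps Hd Hexc).
Qed.
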